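(* For every finite-dimensional bipartite quantum channel $\mathcal{N}_{A'B'\to AB}$, $$\log|A'|\le S(R_AA|R_BB)_{\Phi^{\mathcal{N}}}-S^{\leftrightarrow}[A|B]_{\mathcal{N}}.$$
   Context: $\Phi^{\mathcal{N}}_{R_AAR_BB}=\mathcal{N}(\Phi_{R_AA'}\otimes\Phi_{R_BB'})$ with $\Phi$ the normalized maximally entangled state, $R_A\simeq A'$, $R_B\simeq B'$. $D$ is the Umegaki relative entropy. For completely positive maps $\mathcal{K},\mathcal{L}$ from $A'B'$ to $AB$, the bidirectional channel divergence is $D^{\leftrightarrow}[\mathcal{K}\Vert\mathcal{L}]:=\sup_{\rho_{R_AA'},\omega_{R_BB'}}D(\mathcal{K}(\rho\otimes\omega)\Vert\mathcal{L}(\rho\otimes\omega))$, supremum over product states with arbitrary reference systems $R_A,R_B$. With $\mathcal{R}_{A'\to A}(Y)=\operatorname{tr}(Y)\mathbbm{1}_A$, the bidirectional von Neumann conditional entropy is $S^{\leftrightarrow}[A|B]_{\mathcal{N}}:=-\inf_{\mathcal{M}\in\mathrm{Q}(B',B)}D^{\leftrightarrow}[\mathcal{N}\Vert\mathcal{R}_{A'\to A}\otimes\mathcal{M}_{B'\to B}]$. For states, $S(X|Y)=S(XY)-S(Y)$. *)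

From HB Require Import structures.
From mathcomp Require Import all_boot all_order all_algebra.
From mathcomp Require Import spectral.
From mathcomp Require Import complex.
From mathcomp Require Import boolp classical_sets reals constructive_ereal ereal exp.
Set Implicit Arguments. Unset Strict Implicit. Unset Printing Implicit Defensive.
Import Order.TTheory GRing.Theory Num.Theory.
Local Open Scope ring_scope.

Section QuantumDefs.
Variable R : realType.
Local Notation C := (R[i]).

(* Operators on the finite-dimensional Hilbert space C^T (T a finite
   basis set); an operator is a #|T| x #|T| complex matrix, whose rows and
   columns are indexed by T through enum_rank. *)
Definition Op (T : finType) := 'M[C]_#|T|.

Definition ent (T : finType) (X : Op T) (x y : T) : C :=
  X (enum_rank x) (enum_rank y).

Definition opm (T : finType) (f : T -> T -> C) : Op T :=
  \matrix_(i, j) f (enum_val i) (enum_val j).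

Definition adj m n (X : 'M[C]_(m, n)) : 'M[C]_(n, m) := map_mx Num.conj (trmx X).

Definition psd (T : finType) (X : Op T) : Prop :=
  adj X = X /\ forall u : 'rV[C]_#|T|, 0 <= (u *m X *m adj u) 0 0.

Definition is_state (T : finType) (X : Op T) : Prop := psd X /\ \tr X = 1.

Definition tens (T1 T2 : finType) (X : Op T1) (Y : Op T2) : Op (T1 * T2)%type :=
  opm (fun p q => ent X p.1 q.1 * ent Y p.2 q.2).

Definition Eop (T : finType) (x y : T) : Op T :=
  opm (fun u v => ((u == x) && (v == y))%:R).

(* tensor product F (x) G of linear maps F : L(A1) -> L(A2), G : L(B1) -> L(B2),
   defined by linear extension from matrix units *)
Definition tensmap (A1 A2 B1 B2 : finType)
    (F : Op A1 -> Op A2) (G : Op B1 -> Op B2) (X : Op (A1 * B1)%type) : Op (A2 * B2)%type :=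
  opm (fun p q => \sum_(x : A1) \sum_(x' : A1) \sum_(y : B1) \sum_(y' : B1)
         ent X (x, y) (x', y') * ent (F (Eop x x')) p.1 q.1
                               * ent (G (Eop y y')) p.2 q.2).

Definition idmap (T : finType) (X : Op T) : Op T := X.

Definition is_linear (T1 T2 : finType) (F : Op T1 -> Op T2) : Prop :=
  forall (a : C) (X Y : Op T1), F (a *: X + Y) = a *: F X + F Y.

Definition is_CP (T1 T2 : finType) (F : Op T1 -> Op T2) : Prop :=
  forall (Rf : finType) (X : Op (Rf * T1)%type), psd X -> psd (tensmap (@idmap Rf) F X).

Definition is_TP (T1 T2 : finType) (F : Op T1 -> Op T2) : Prop :=
  forall X : Op T1, \tr (F X) = \tr X.

Definition is_channel (T1 T2 : finType) (F : Op T1 -> Op T2) : Prop :=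
  [/\ is_linear F, is_CP F & is_TP F].

Definition ptrace1 (T1 T2 : finType) (X : Op (T1 * T2)%type) : Op T2 :=
  opm (fun y y' => \sum_(x : T1) ent X (x, y) (x, y')).

Definition mid_idx (P Q U V : finType) (z : ((P * U) * (Q * V))%type) : ((P * Q) * (U * V))%type :=
  ((z.1.1, z.2.1), (z.1.2, z.2.2)).
Definition mid (P Q U V : finType) (X : Op ((P * Q) * (U * V))%type) : Op ((P * U) * (Q * V))%type :=
  opm (fun z w => ent X (mid_idx z) (mid_idx w)).

Definition maxent (T : finType) : Op (T * T)%type :=
  opm (fun p q => ((p.1 == p.2) && (q.1 == q.2))%:R / #|T|%:R).

Definition fcalc n (f : C -> C) (X : 'M[C]_n) : 'M[C]_n :=
  invmx (spectralmx X) *m diag_mx (map_mx f (spectral_diag X)) *m spectralmx X.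

(* logarithm on the support (eigenvalue 0 is sent to 0) *)
Definition logc (z : C) : C := if 0 < @complex.Re R z then ((ln (@complex.Re R z))%:C)%C else 0.

Definition xlnx (x : R) : R := if 0 < x then x * ln x else 0.

Definition vnS (T : finType) (X : Op T) : R :=
  - \sum_(i < #|T|) xlnx (@complex.Re R (spectral_diag X 0 i)).

Definition condS (T1 T2 : finType) (X : Op (T1 * T2)%type) : R :=
  vnS X - vnS (ptrace1 X).

(* Umegaki relative entropy D(rho||sigma) = tr rho (log rho - log sigma) if
   supp rho <= supp sigma, +oo otherwise (for positive semidefinite operators,
   the row-space inclusion (rho <= sigma)%MS is the support inclusion). *)
Definition relent (T : finType) (X Y : Op T) : \bar R :=
  if (X <= Y)%MS then
    (@complex.Re R (\tr (X *m fcalc logc X)) - @complex.Re R (\tr (X *m fcalc logc Y)))%:E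
  else +oo%E.

Definition bimap (A' B' A B RA RB : finType) (K : Op (A' * B')%type -> Op (A * B)%type)
    (X : Op ((RA * A') * (RB * B'))%type) : Op ((RA * A) * (RB * B))%type :=
  mid (tensmap (@idmap (RA * RB)%type) K (mid X)).

Definition bidiv (A' B' A B : finType) (K L : Op (A' * B')%type -> Op (A * B)%type) : \bar R :=
  ereal_sup [set d | exists (RA RB : finType) (rho : Op (RA * A')%type) (om : Op (RB * B')%type),
     [/\ is_state rho, is_state om &
         d = relent (bimap K (tens rho om)) (bimap L (tens rho om))]].

Definition trmap (T1 T2 : finType) (Y : Op T1) : Op T2 := \tr Y *: 1%:M.

Definition biS (A' B' A B : finType) (N : Op (A' * B')%type -> Op (A * B)%type) : \bar R :=
  (- ereal_inf [set d | exists M : Op B' -> Op B,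
       is_channel M /\ d = bidiv N (tensmap (@trmap A' A) M)])%E.

Definition choi (A' B' A B : finType) (N : Op (A' * B')%type -> Op (A * B)%type)
  : Op ((A' * A) * (B' * B))%type :=
  bimap N (tens (maxent A') (maxent B')).

End QuantumDefs.

From HB Require Import structures.
From mathcomp Require Import all_boot all_order all_algebra.
From mathcomp Require Import spectral complex.
From mathcomp Require Import boolp classical_sets reals constructive_ereal ereal exp.
From mathcomp Require Import ring lra.
Set Implicit Arguments. Unset Strict Implicit. Unset Printing Implicit Defensive.
Import Order.TTheory GRing.Theory Num.Theory.
Local Open Scope ring_scope.
Local Open Scope sesquilinear_scope.

(* Feeding the Choi input [Phi (x) Phi] to both channels shows that [-S<->[A|B]_N] is at least
   the infimum over channels [M] of [D(Phi^N || (R (x) M)(Phi (x) Phi))].  The second argument is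
   [1/|A'| 1_{R_A A} (x) sigma] with [sigma = (id (x) M)(Phi_{R_B B'})] a state, so this divergence
   equals [log|A'| - S(R_A A R_B B) - tr(rho_{R_B B} log sigma)], and Klein's inequality
   [- tr(rho log sigma) >= S(rho)] bounds it below by [log|A'| - S(R_A A|R_B B)].  Klein's
   inequality is proved in the two eigenbases: the squared overlaps of the eigenvectors form a
   doubly stochastic matrix, and concavity of [ln] together with Gibbs' inequality conclude. *)

Section RealInequalities.
Variable R : realType.

Definition lnp (x : R) : R := if 0 < x then ln x else 0.

Lemma ln_le_subr1 (y : R) : 0 < y -> ln y <= y - 1.
Proof. by move=> y0; have := @le_ln1Dx R (y - 1); rewrite [1 + _]addrC subrK; apply; lra. Qed.

Lemma ln_sub_le (a b : R) : 0 < a -> 0 < b -> ln a - ln b <= a / b - 1.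
Proof. by move=> a0 b0; rewrite -ln_div ?posrE // ln_le_subr1 ?divr_gt0. Qed.

Lemma mul_ln_le_xlnx (d r : R) : 0 <= d -> 0 < r -> d * ln r <= xlnx d + r - d.
Proof.
rewrite le_eqVlt => /predU1P[<- r0|d0 r0]; first by rewrite /xlnx ltxx; lra.
have := ler_wpM2l (ltW d0) (ln_sub_le r0 d0).
rewrite /xlnx d0 mulrBr mulrBr mulr1 mulrCA divff ?mulr1 ?gt_eqF //; lra.
Qed.

(* Concavity of [ln], in the tangent-line form [ln e <= ln r + e / r - 1]. *)
Lemma jensen_lnp n (w e : 'I_n -> R) :
  (forall j, 0 <= w j) -> \sum_j w j = 1 -> (forall j, 0 <= e j) ->
  (forall j, e j = 0 -> w j = 0) ->
  0 < \sum_j w j * e j /\ \sum_j w j * lnp (e j) <= ln (\sum_j w j * e j).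
Proof.
move=> w0 w1 e0 supp; set r := \sum_j w j * e j.
have we0 j : 0 <= w j * e j by rewrite mulr_ge0.
have r0 : 0 < r.
  rewrite lt_def sumr_ge0 // andbT; apply/eqP => /(psumr_eq0P (fun j _ => we0 j)) r00.
  have /eqP := w1; rewrite big1 ?(eq_sym 0) ?oner_eq0 // => j _.
  have /eqP := r00 j isT; rewrite mulf_eq0 => /orP[/eqP //|/eqP]; exact: supp.
split=> //; apply: le_trans (_ : \sum_j w j * (ln r + e j / r - 1) <= _).
  apply: ler_sum => j _; rewrite /lnp; case: ltrP => [ej|ej].
    by rewrite ler_wpM2l //; have := ln_sub_le ej r0; lra.
  by rewrite supp ?mul0r //; apply/le_anti; rewrite ej e0.
rewrite (eq_bigr (fun j => w j * (ln r - 1) + w j * e j / r)) => [|j _]; last by ring.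
by rewrite big_split /= -mulr_suml w1 -mulr_suml divff ?gt_eqF //; lra.
Qed.

(* Klein's inequality, written in the eigenbases of the two states. *)
Lemma gibbs_doubly_stochastic n (d e : 'I_n -> R) (w : 'I_n -> 'I_n -> R) :
  (forall i, 0 <= d i) -> (forall j, 0 <= e j) -> (forall i j, 0 <= w i j) ->
  (forall i, \sum_j w i j = 1) -> (forall j, \sum_i w i j = 1) ->
  \sum_i d i = 1 -> \sum_j e j = 1 ->
  (forall i j, 0 < d i -> e j = 0 -> w i j = 0) ->
  \sum_i \sum_j d i * w i j * lnp (e j) <= \sum_i xlnx (d i).
Proof.
move=> d0 e0 w0 wr wc d1 e1 supp.
pose r i := \sum_j w i j * e j.
have row i : \sum_j d i * w i j * lnp (e j) <= xlnx (d i) + r i - d i.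
  under eq_bigr do rewrite -mulrA; rewrite -mulr_sumr.
  case: (ltrP 0 (d i)) => [di0|]; last first.
    move=> di; have -> : d i = 0 by apply/le_anti; rewrite di d0.
    by rewrite mul0r /xlnx ltxx subr0 add0r sumr_ge0 // => j _; rewrite mulr_ge0.
  have [r0 jen] := jensen_lnp (w0 i) (wr i) e0 (fun j => supp i j di0).
  exact: le_trans (ler_wpM2l (d0 i) jen) (mul_ln_le_xlnx (d0 i) r0).
apply: le_trans (ler_sum _ (fun i _ => row i)) _.
have r1 : \sum_i r i = 1.
  rewrite /r exchange_big /= -e1; apply: eq_bigr => j _.
  by rewrite -mulr_suml wc mul1r.
by rewrite !big_split /= sumrN r1 d1; lra.
Qed.

End RealInequalities.

Section Quantum.
Variable R : realType.
Local Notation C := (R[i]).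
Local Notation Op := (Op R).
Local Notation Re := (@complex.Re R).

Lemma ent_opm (T : finType) (f : T -> T -> C) x y : ent (opm f) x y = f x y.
Proof. by rewrite /ent /opm mxE !enum_rankK. Qed.

Lemma opP (T : finType) (X Y : Op T) : (forall x y, ent X x y = ent Y x y) -> X = Y.
Proof. by move=> eXY; apply/matrixP => i j; rewrite -(enum_valK i) -(enum_valK j); apply: eXY. Qed.

Lemma sum_enum_rank (T : finType) (F : 'I_#|T| -> C) :
  \sum_(k < #|T|) F k = \sum_(t : T) F (enum_rank t).
Proof.
by rewrite (reindex (@enum_rank T)) //; exists (@enum_val T T) => i _;
  [exact: enum_rankK | exact: enum_valK].
Qed.

Lemma ent_mul (T : finType) (X Y : Op T) x y :
  ent (X *m Y) x y = \sum_z ent X x z * ent Y z y.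
Proof. by rewrite /ent mxE sum_enum_rank. Qed.

Lemma mxtrace_ent (T : finType) (X : Op T) : \tr X = \sum_x ent X x x.
Proof. by rewrite /mxtrace sum_enum_rank. Qed.

Lemma ent_adj (T : finType) (X : Op T) x y : ent (adj X) x y = (ent X y x)^*.
Proof. by rewrite /ent !mxE. Qed.

Lemma ent_1 (T : finType) (x y : T) : ent (1%:M : Op T) x y = (x == y)%:R.
Proof. by rewrite /ent mxE (inj_eq enum_rank_inj). Qed.

Lemma ent_scale (T : finType) (a : C) (X : Op T) x y : ent (a *: X) x y = a * ent X x y.
Proof. by rewrite /ent mxE. Qed.

Lemma ent_tens (T1 T2 : finType) (X : Op T1) (Y : Op T2) p q :
  ent (tens X Y) p q = ent X p.1 q.1 * ent Y p.2 q.2.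
Proof. exact: ent_opm. Qed.

Lemma ent_Eop (T : finType) (x y a b : T) : ent (Eop R x y) a b = ((a == x) && (b == y))%:R.
Proof. exact: ent_opm. Qed.

Lemma hermitian_ent (T : finType) (X : Op T) : adj X = X -> forall a b, ent X a b = (ent X b a)^*.
Proof. by move=> hX a b; rewrite -{1}hX ent_adj. Qed.

Lemma natr_andb (a b : bool) : ((a && b)%:R : C) = a%:R * b%:R.
Proof. by case: a; case: b; rewrite ?mulr1 ?mulr0. Qed.

Lemma sum_pair (P Q : finType) (F : P * Q -> C) : \sum_z F z = \sum_x \sum_y F (x, y).
Proof. by rewrite pair_bigA; apply: eq_bigr => -[]. Qed.

Lemma sum_delta (T : finType) (x : T) (F : T -> C) : \sum_y (x == y)%:R * F y = F x.
Proof.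
rewrite (bigD1 x) //= big1 ?addr0 ?eqxx ?mul1r // => y.
by rewrite eq_sym => /negbTE ->; rewrite mul0r.
Qed.

Lemma sum_delta_fst (P Q : finType) (x : P) (F : P * Q -> C) :
  \sum_z (x == z.1)%:R * F z = \sum_y F (x, y).
Proof.
rewrite sum_pair -(sum_delta x (fun x' => \sum_y F (x', y))).
by apply: eq_bigr => x' _; rewrite mulr_sumr.
Qed.

Lemma quad_ent (T : finType) (M : Op T) (u : 'rV[C]_#|T|) :
  (u *m M *m adj u) 0 0 =
  \sum_a \sum_b u 0 (enum_rank a) * ent M a b * (u 0 (enum_rank b))^*.
Proof.
rewrite mxE sum_enum_rank exchange_big /=; apply: eq_bigr => b _.
by rewrite mxE sum_enum_rank mulr_suml; apply: eq_bigr => a _; rewrite !mxE.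
Qed.

Lemma ent_sandwich (T : finType) (A B : Op T) (h : 'rV[C]_#|T|) z w :
  ent (A^t* *m diag_mx h *m B) z w = \sum_u (ent A u z)^* * h 0 (enum_rank u) * ent B u w.
Proof.
by rewrite /ent mxE sum_enum_rank; apply: eq_bigr => u _; rewrite mul_mx_diag !mxE.
Qed.

Lemma Re_sum (I : finType) (F : I -> C) : Re (\sum_i F i) = \sum_i Re (F i).
Proof. exact: (raddf_sum (@complex.Re R : Rcomplex R -> R)). Qed.

Lemma Re_realM (r : R) (z : C) : Re (r%:C * z)%C = r * Re z.
Proof. by case: z => a b /=; rewrite mul0r subr0. Qed.

Lemma Cnneg_real (z : C) : 0 <= z -> z = (Re z)%:C%C /\ 0 <= Re z.
Proof. by case: z => a b; rewrite lecE /= => /andP[/eqP -> ->]. Qed.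

Lemma unitarymx_adjl n (W : 'M[C]_n) : W \is unitarymx -> W^t* *m W = 1%:M.
Proof. by rewrite -trmxC_unitary => /unitarymxP; rewrite trmxCK. Qed.

Lemma fcalcE n f (X : 'M[C]_n) :
  fcalc f X = (spectralmx X)^t* *m diag_mx (map_mx f (spectral_diag X)) *m spectralmx X.
Proof. by rewrite /fcalc invmx_unitary // spectral_unitarymx. Qed.

Lemma normal_spectralE n (X : 'M[C]_n) : X \is normalmx ->
  X = (spectralmx X)^t* *m diag_mx (spectral_diag X) *m spectralmx X.
Proof. by move/orthomx_spectralP => {1}->; rewrite invmx_unitary // spectral_unitarymx. Qed.

Lemma normalmx_unitary_diag n (X W : 'M[C]_n) (h : 'rV[C]_n) :
  W \is unitarymx -> X = W^t* *m diag_mx h *m W -> X \is normalmx.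
Proof.
by move=> Wu defX; apply/orthomx_spectral_subproof; exists (W, h); rewrite //= invmx_unitary.
Qed.

Lemma fcalc_unitary_diag n f (X W : 'M[C]_n) (h : 'rV[C]_n) :
  W \is unitarymx -> X = W^t* *m diag_mx h *m W ->
  fcalc f X = W^t* *m diag_mx (map_mx f h) *m W.
Proof.
move=> Wu defX.
have Xn := normalmx_unitary_diag Wu defX.
have Pu := spectral_unitarymx X.
set P := spectralmx X in Pu *; set e := spectral_diag X.
set Z := P *m W^t*.
have eZ : diag_mx e *m Z = Z *m diag_mx h.
  have := congr1 (fun M => P *m M *m W^t*) (normal_spectralE Xn).
  rewrite -/P -/e {1}defX !mulmxA (unitarymxP Pu) mul1mx.
  rewrite -!mulmxA (unitarymxP Wu) mulmx1 => <-.
  by rewrite /Z !mulmxA.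
have ZW : Z *m W = P by rewrite /Z -mulmxA unitarymx_adjl // mulmx1.
have PZ : P^t* *m Z = W^t* by rewrite /Z mulmxA unitarymx_adjl // mul1mx.
clearbody Z.
have feZ : diag_mx (map_mx f e) *m Z = Z *m diag_mx (map_mx f h).
  apply/matrixP => i j; move/matrixP/(_ i j): eZ.
  rewrite !mul_diag_mx !mul_mx_diag !mxE => eZij.
  have [->|nzZ] := eqVneq (Z i j) 0; first by rewrite mulr0 mul0r.
  have -> : e 0 i = h 0 j by apply: (mulIf nzZ); rewrite eZij mulrC.
  by rewrite mulrC.
by rewrite fcalcE -/P -/e -{2}ZW mulmxA -(mulmxA _ _ Z) feZ mulmxA PZ.
Qed.

Lemma scale_spectralE n (a : C) (X : 'M[C]_n) : X \is normalmx ->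
  a *: X = (spectralmx X)^t* *m diag_mx (a *: spectral_diag X) *m spectralmx X.
Proof.
move=> Xn; have aD : a *: diag_mx (spectral_diag X) = diag_mx (a *: spectral_diag X).
  by apply/matrixP => i j; rewrite !mxE mulrnAr.
by rewrite {1}(normal_spectralE Xn) scalemxAl scalemxAr aD.
Qed.

Lemma normalmxZ n (a : C) (X : 'M[C]_n) : X \is normalmx -> a *: X \is normalmx.
Proof. by move=> Xn; rewrite (scale_spectralE a Xn) (normalmx_unitary_diag _ erefl) ?spectral_unitarymx. Qed.

Lemma fcalcZ n f (a : C) (X : 'M[C]_n) : X \is normalmx ->
  fcalc f (a *: X) = fcalc (fun z => f (a * z)) X.
Proof.
move=> Xn; have fa : map_mx f (a *: spectral_diag X) = map_mx (fun z => f (a * z)) (spectral_diag X).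
  by apply/matrixP => i j; rewrite !mxE.
by rewrite (fcalc_unitary_diag f (spectral_unitarymx X) (scale_spectralE a Xn)) fa fcalcE.
Qed.

Lemma mxtrace_spectral_mul n (U V : 'M[C]_n) (a b : 'rV[C]_n) :
  \tr ((U^t* *m diag_mx a *m U) *m (V^t* *m diag_mx b *m V)) =
  \sum_i \sum_j a 0 i * b 0 j * ((U *m V^t*) i j * ((U *m V^t*) i j)^*).
Proof.
set W := U *m V^t*.
have WV : V *m U^t* = W^t* by rewrite /W trmx_mul map_mxM trmxCK.
have -> : (U^t* *m diag_mx a *m U) *m (V^t* *m diag_mx b *m V) =
          U^t* *m (diag_mx a *m W *m diag_mx b *m V) by rewrite /W !mulmxA.
clearbody W; rewrite mxtrace_mulC -!mulmxA WV.
apply: eq_bigr => i _; rewrite mul_diag_mx !mxE mulr_sumr; apply: eq_bigr => j _.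
by rewrite mul_diag_mx !mxE; ring.
Qed.

Lemma psd_normalmx (T : finType) (X : Op T) : psd X -> X \is normalmx.
Proof. by move=> [hX _]; apply/normalmxP; rewrite -[_^t*]/(adj X) hX. Qed.

Lemma psd_spectral_diag_ge0 (T : finType) (X : Op T) i : psd X -> 0 <= spectral_diag X 0 i.
Proof.
move=> Xp; have [_ /(_ (row i (spectralmx X)))] := Xp.
set P := spectralmx X; have Pu : P \is unitarymx by apply: spectral_unitarymx.
have -> : (row i P *m X *m adj (row i P)) 0 0 = (P *m X *m P^t*) i i.
  rewrite !mxE; apply: eq_bigr => k _; rewrite !mxE; congr (_ * _).
  by apply: eq_bigr => l _; rewrite !mxE.
rewrite {1}(normal_spectralE (psd_normalmx Xp)) -/P !mulmxA (unitarymxP Pu) mul1mx.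
by rewrite mulmxtVK // mxE eqxx mulr1n.
Qed.

Definition eigval (T : finType) (X : Op T) (i : 'I_#|T|) : R := Re (spectral_diag X 0 i).

Lemma spectral_diag_eigval (T : finType) (X : Op T) i : psd X ->
  spectral_diag X 0 i = (eigval X i)%:C%C.
Proof. by move=> Xp; case: (Cnneg_real (psd_spectral_diag_ge0 i Xp)). Qed.

Lemma eigval_ge0 (T : finType) (X : Op T) i : psd X -> 0 <= eigval X i.
Proof. by move=> Xp; case: (Cnneg_real (psd_spectral_diag_ge0 i Xp)). Qed.

Lemma sum_eigval (T : finType) (X : Op T) : psd X -> \sum_i eigval X i = Re (\tr X).
Proof.
move=> Xp; rewrite -Re_sum {2}(normal_spectralE (psd_normalmx Xp)) mxtrace_mulC.
by rewrite mulmxA (unitarymxP (spectral_unitarymx X)) mul1mx mxtrace_diag.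
Qed.

Definition basis_change (T : finType) (X Y : Op T) : Op T := spectralmx X *m (spectralmx Y)^t*.

Definition overlap (T : finType) (X Y : Op T) (i j : 'I_#|T|) : R :=
  Re (basis_change X Y i j * (basis_change X Y i j)^*).

Lemma basis_change_unitary (T : finType) (X Y : Op T) : basis_change X Y \is unitarymx.
Proof. by rewrite mul_unitarymx ?trmxC_unitary ?spectral_unitarymx. Qed.

Lemma overlapE (T : finType) (X Y : Op T) i j :
  basis_change X Y i j * (basis_change X Y i j)^* = (overlap X Y i j)%:C%C.
Proof. exact: (Cnneg_real (mul_conjC_ge0 _)).1. Qed.

Lemma overlap_ge0 (T : finType) (X Y : Op T) i j : 0 <= overlap X Y i j.
Proof. exact: (Cnneg_real (mul_conjC_ge0 _)).2. Qed.

Lemma sum_overlap_row (T : finType) (X Y : Op T) i : \sum_j overlap X Y i j = 1.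
Proof.
have /matrixP/(_ i i) := unitarymxP (basis_change_unitary X Y).
rewrite !mxE eqxx mulr1n => W1; rewrite /overlap -Re_sum (_ : \sum_j _ = 1) //.
by rewrite -W1; apply: eq_bigr => j _; rewrite !mxE.
Qed.

Lemma sum_overlap_col (T : finType) (X Y : Op T) j : \sum_i overlap X Y i j = 1.
Proof.
have /matrixP/(_ j j) := unitarymx_adjl (basis_change_unitary X Y).
rewrite !mxE eqxx mulr1n => W1; rewrite /overlap -Re_sum (_ : \sum_i _ = 1) //.
by rewrite -W1; apply: eq_bigr => i _; rewrite !mxE mulrC.
Qed.

Lemma overlap_self (T : finType) (X : Op T) i j : overlap X X i j = (i == j)%:R.
Proof.
rewrite /overlap /basis_change (unitarymxP (spectral_unitarymx X)) mxE.
by rewrite conjC_nat -natrM; case: (i == j); rewrite /= ?mulr1n ?mulr0n.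
Qed.

(* With [X = D Y], [U X V^*] is both [d W] and [(U D V^* ) e], so [d_i W_ij = 0] when [e_j = 0]. *)
Lemma overlap_support (T : finType) (X Y : Op T) i j : psd X -> psd Y -> (X <= Y)%MS ->
  0 < eigval X i -> eigval Y j = 0 -> overlap X Y i j = 0.
Proof.
move=> Xp Yp /submxP[D defX] di ej.
set U := spectralmx X; set V := spectralmx Y.
have Uu : U \is unitarymx by apply: spectral_unitarymx.
have Vu : V \is unitarymx by apply: spectral_unitarymx.
have UXV : U *m X *m V^t* = diag_mx (spectral_diag X) *m basis_change X Y.
  by rewrite {1}(normal_spectralE (psd_normalmx Xp)) -/U !mulmxA (unitarymxP Uu) mul1mx.
have UXV' : U *m X *m V^t* = U *m D *m V^t* *m diag_mx (spectral_diag Y).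
  by rewrite defX {1}(normal_spectralE (psd_normalmx Yp)) -/V !mulmxA mulmxtVK.
move/matrixP/(_ i j): (etrans (esym UXV) UXV').
rewrite mul_diag_mx mul_mx_diag !mxE !spectral_diag_eigval // ej mulr0 => /eqP.
rewrite mulf_eq0 => /orP[/eqP[/eqP]|/eqP bij]; first by rewrite gt_eqF.
by rewrite /overlap /basis_change mxE bij mul0r.
Qed.

Lemma Re_mxtrace_mul_fcalc (T : finType) (X Y : Op T) f : psd X -> psd Y ->
  Re (\tr (X *m fcalc f Y)) =
  \sum_i \sum_j eigval X i * overlap X Y i j * Re (f (eigval Y j)%:C%C).
Proof.
move=> Xp Yp; rewrite {1}(normal_spectralE (psd_normalmx Xp)) fcalcE.
rewrite mxtrace_spectral_mul Re_sum; apply: eq_bigr => i _.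
rewrite Re_sum; apply: eq_bigr => j _.
by rewrite mxE !spectral_diag_eigval // -/(basis_change X Y) overlapE mulrAC -rmorphM Re_realM.
Qed.

Lemma Re_logc_real (x : R) : Re (logc x%:C%C) = lnp x.
Proof. by rewrite /logc /lnp /=; case: ifP. Qed.

Lemma Re_mxtrace_mul_logc (T : finType) (X : Op T) : psd X ->
  Re (\tr (X *m fcalc (@logc R) X)) = - vnS X.
Proof.
move=> Xp; rewrite Re_mxtrace_mul_fcalc // /vnS opprK; apply: eq_bigr => i _.
rewrite (bigD1 i) //= big1 => [|j /negbTE nij]; last by rewrite overlap_self eq_sym nij mulr0 mul0r.
by rewrite overlap_self eqxx mulr1 addr0 Re_logc_real /lnp /xlnx; case: ifP; rewrite ?mulr0.
Qed.

Definition lift_snd (P Q : finType) (h : 'rV[C]_#|Q|) : 'rV[C]_#|{: P * Q}| :=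
  \row_k h 0 (enum_rank (enum_val k).2).

Lemma tens1_unitary (P Q : finType) (V : Op Q) :
  V \is unitarymx -> tens (1%:M : Op P) V \is unitarymx.
Proof.
move=> Vu; apply/unitarymxP; apply: opP => -[x y] [x' y']; rewrite ent_mul ent_1 xpair_eqE natr_andb.
transitivity (\sum_z (x == z.1)%:R * ((x' == z.1)%:R * (ent V y z.2 * (ent V y' z.2)^*))).
  apply: eq_bigr => z _; rewrite -[_^t*]/(adj _) ent_adj !ent_tens !ent_1 /=.
  by rewrite rmorphM /= conjC_nat; ring.
rewrite sum_delta_fst /= -mulr_sumr (eq_sym x') -(ent_1 y y') -(unitarymxP Vu) ent_mul.
by congr (_ * _); apply: eq_bigr => z _; rewrite -[_^t*]/(adj _) ent_adj.
Qed.

Lemma tens1_sandwich (P Q : finType) (V : Op Q) (h : 'rV[C]_#|Q|) :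
  (tens (1%:M : Op P) V)^t* *m diag_mx (lift_snd P h) *m tens 1%:M V =
  tens 1%:M (V^t* *m diag_mx h *m V).
Proof.
apply: opP => -[x y] [x' y']; rewrite ent_tens !ent_sandwich ent_1 /= mulr_sumr.
transitivity (\sum_z (x == z.1)%:R * ((x == x')%:R *
                ((ent V z.2 y)^* * h 0 (enum_rank z.2) * ent V z.2 y'))).
  apply: eq_bigr => z _; rewrite !ent_tens !ent_1 /lift_snd mxE enum_rankK /=.
  rewrite rmorphM /= conjC_nat (eq_sym x); have [->|_] := eqVneq z.1 x; last by rewrite !mul0r.
  by rewrite !mul1r mulrCA.
by rewrite sum_delta_fst.
Qed.

Lemma fcalc_tens1 (P Q : finType) f (Y : Op Q) : Y \is normalmx ->
  fcalc f (tens (1%:M : Op P) Y) = tens 1%:M (fcalc f Y).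
Proof.
move=> Yn; rewrite [in RHS]fcalcE -tens1_sandwich.
have -> : lift_snd P (map_mx f (spectral_diag Y)) = map_mx f (lift_snd P (spectral_diag Y)).
  by apply/matrixP => i j; rewrite !mxE.
apply: fcalc_unitary_diag; first exact/tens1_unitary/spectral_unitarymx.
by rewrite tens1_sandwich -normal_spectralE.
Qed.

Lemma mxtrace_ptrace1 (P Q : finType) (X : Op (P * Q)%type) : \tr (ptrace1 X) = \tr X.
Proof.
rewrite !mxtrace_ent sum_pair exchange_big /=; apply: eq_bigr => y _.
by rewrite ent_opm.
Qed.

(* The vector [e_x (x) u], which reduces a quadratic form of [ptrace1 X] to one of [X]. *)
Definition slice_row (P Q : finType) (x : P) (u : 'rV[C]_#|Q|) : 'rV[C]_#|{: P * Q}| :=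
  \row_k ((x == (enum_val k).1)%:R * u 0 (enum_rank (enum_val k).2)).

Lemma quad_slice_row (P Q : finType) (X : Op (P * Q)%type) x u :
  (slice_row x u *m X *m adj (slice_row x u)) 0 0 =
  \sum_y \sum_y' u 0 (enum_rank y) * ent X (x, y) (x, y') * (u 0 (enum_rank y'))^*.
Proof.
rewrite quad_ent.
transitivity (\sum_a (x == a.1)%:R * \sum_b (x == b.1)%:R *
   (u 0 (enum_rank a.2) * ent X a b * (u 0 (enum_rank b.2))^*)).
  apply: eq_bigr => a _; rewrite mulr_sumr; apply: eq_bigr => b _.
  by rewrite !mxE !enum_rankK rmorphM /= conjC_nat; ring.
by rewrite sum_delta_fst; apply: eq_bigr => y _; rewrite sum_delta_fst.
Qed.

Lemma ptrace1_psd (P Q : finType) (X : Op (P * Q)%type) : psd X -> psd (ptrace1 X).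
Proof.
move=> [hX qX]; split.
  apply: opP => y y'; rewrite ent_adj !ent_opm rmorph_sum; apply: eq_bigr => x _.
  by rewrite [RHS](hermitian_ent hX).
move=> u; suff -> : (u *m ptrace1 X *m adj u) 0 0 = \sum_x (slice_row x u *m X *m adj (slice_row x u)) 0 0.
  by apply: sumr_ge0 => x _; apply: qX.
under [RHS]eq_bigr do rewrite quad_slice_row.
rewrite quad_ent [RHS]exchange_big; apply: eq_bigr => y _.
rewrite [RHS]exchange_big; apply: eq_bigr => y' _.
by rewrite ent_opm mulr_sumr mulr_suml.
Qed.

Lemma ptrace1_mul_tens1 (P Q : finType) (X : Op (P * Q)%type) (G : Op Q) :
  ptrace1 (X *m tens (1%:M : Op P) G) = ptrace1 X *m G.
Proof.
apply: opP => y y'; rewrite ent_opm ent_mul.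
transitivity (\sum_x \sum_y'' ent X (x, y) (x, y'') * ent G y'' y').
  apply: eq_bigr => x _.
  rewrite ent_mul sum_pair (bigD1 x) //= [X in _ + X]big1 ?addr0 => [|x' nx].
    by apply: eq_bigr => y'' _; rewrite ent_tens ent_1 eqxx mul1r.
  by apply: big1 => y'' _; rewrite ent_tens ent_1 /= (negbTE nx) mul0r mulr0.
by rewrite exchange_big; apply: eq_bigr => y'' _; rewrite ent_opm mulr_suml.
Qed.

Lemma mxtrace_mul_tens1 (P Q : finType) (X : Op (P * Q)%type) (G : Op Q) :
  \tr (X *m tens (1%:M : Op P) G) = \tr (ptrace1 X *m G).
Proof. by rewrite -mxtrace_ptrace1 ptrace1_mul_tens1. Qed.

Lemma submx_tens1_ptrace1 (P Q : finType) (X : Op (P * Q)%type) (Y : Op Q) :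
  (X <= tens (1%:M : Op P) Y)%MS -> (ptrace1 X <= Y)%MS.
Proof. by move=> /submxP[D ->]; apply/submxP; exists (ptrace1 D); rewrite ptrace1_mul_tens1. Qed.

Lemma Re_mxtrace_mul_logc_scale (T : finType) (X Y : Op T) (c : R) :
  is_state X -> is_state Y -> (X <= Y)%MS -> 0 < c ->
  Re (\tr (X *m fcalc (fun z => logc (c%:C%C * z)) Y)) <= ln c - vnS X.
Proof.
move=> [Xp trX] [Yp trY] XY c0; rewrite Re_mxtrace_mul_fcalc //.
set d := eigval X; set e := eigval Y; set w := overlap X Y.
have d0 i : 0 <= d i by apply: eigval_ge0.
have e0 j : 0 <= e j by apply: eigval_ge0.
have supp i j : 0 < d i -> e j = 0 -> w i j = 0 by apply: overlap_support.
have term i j : d i * w i j * Re (logc (c%:C * (e j)%:C)%C) =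
                d i * w i j * ln c + d i * w i j * lnp (e j).
  rewrite -rmorphM Re_logc_real /lnp pmulr_rgt0 //; case: ltrP => [ej|ej].
    by rewrite lnM ?posrE //; ring.
  have {ej}ej : e j = 0 by apply/le_anti; rewrite ej e0.
  case: (ltrP 0 (d i)) => [di|di]; first by rewrite supp // !(mulr0, mul0r, addr0).
  have -> : d i = 0 by apply/le_anti; rewrite di d0.
  by rewrite !(mulr0, mul0r, addr0).
under eq_bigr do under eq_bigr do rewrite term.
rewrite (eq_bigr (fun i => d i * ln c + \sum_j d i * w i j * lnp (e j))) => [|i _]; last first.
  by rewrite big_split /= -mulr_suml -mulr_sumr sum_overlap_row mulr1.
rewrite big_split /= -mulr_suml sum_eigval // trX mul1r /vnS opprK lerD2l.
apply: gibbs_doubly_stochastic => //; first exact: overlap_ge0.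
- exact: sum_overlap_row.
- exact: sum_overlap_col.
- by rewrite sum_eigval // trX.
- by rewrite sum_eigval // trY.
Qed.

Lemma relent_tens1_ge (P Q : finType) (X : Op (P * Q)%type) (Y : Op Q) (c : R) :
  is_state X -> is_state Y -> 0 < c ->
  ((- ln c - condS X)%:E <= relent X (tens (1%:M : Op P) (c%:C%C *: Y)))%E.
Proof.
move=> [Xp trX] Ys c0; rewrite /relent; case: ifP => XY; last by rewrite leey.
have Yn := psd_normalmx Ys.1.
have tX : is_state (ptrace1 X) by split; [exact: ptrace1_psd | rewrite mxtrace_ptrace1].
have tY : (ptrace1 X <= Y)%MS.
  by rewrite -(eqmx_scale Y (_ : c%:C%C != 0)) ?gt_eqF ?ltcR //; exact: submx_tens1_ptrace1.
have eY : Re (\tr (X *m fcalc (@logc R) (tens (1%:M : Op P) (c%:C%C *: Y)))) =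
          Re (\tr (ptrace1 X *m fcalc (fun z => logc (c%:C * z)%C) Y)).
  by rewrite (fcalc_tens1 P _ (normalmxZ _ Yn)) (fcalcZ _ _ Yn) mxtrace_mul_tens1.
have := Re_mxtrace_mul_logc_scale tX Ys tY c0.
have eX := Re_mxtrace_mul_logc Xp.
rewrite lee_fin /condS; lra.
Qed.

Lemma psd_outer (T : finType) (k : R) (g : T -> C) : 0 <= k ->
  psd (opm (fun p q => k%:C%C * (g p * (g q)^*)) : Op T).
Proof.
move=> k0; have kC : (k%:C%C)^* = k%:C%C by apply: conj_Creal; apply/complex_realP; exists k.
split.
  by apply: opP => p q; rewrite ent_adj !ent_opm !rmorphM /= conjCK kC; ring.
move=> u; rewrite quad_ent.
set s := \sum_a u 0 (enum_rank a) * g a.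
suff -> : \sum_a \sum_b u 0 (enum_rank a) * ent (opm (fun p q => k%:C%C * (g p * (g q)^*)) : Op T) a b *
     (u 0 (enum_rank b))^* = k%:C%C * (s * s^*).
  by rewrite mulr_ge0 ?ler0c ?mul_conjC_ge0.
rewrite rmorph_sum mulr_suml mulr_sumr; apply: eq_bigr => a _.
rewrite mulr_sumr mulr_sumr; apply: eq_bigr => b _.
by rewrite ent_opm rmorphM /=; ring.
Qed.

Lemma ent_maxent (T : finType) p q :
  ent (maxent R T) p q = (#|T|%:R^-1 : R)%:C%C * ((p.1 == p.2)%:R * ((q.1 == q.2)%:R)^*).
Proof. by rewrite ent_opm conjC_nat natr_andb fmorphV rmorph_nat /=; ring. Qed.

Lemma maxent_state (T : finType) : (0 < #|T|)%N -> is_state (maxent R T).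
Proof.
move=> T0; split.
  have -> : maxent R T = opm (fun p q => (#|T|%:R^-1 : R)%:C%C * ((p.1 == p.2)%:R * ((q.1 == q.2)%:R)^*)).
    by apply: opP => p q; rewrite ent_maxent ent_opm.
  by apply: psd_outer; rewrite invr_ge0 ler0n.
rewrite mxtrace_ent sum_pair.
under eq_bigr do under eq_bigr do rewrite ent_maxent conjC_nat /= mulrC -mulrA.
under eq_bigr do rewrite sum_delta eqxx mul1r.
rewrite sumr_const fmorphV rmorph_nat -[_ *+ #|_|]mulr_natr mulVf //.
by rewrite pnatr_eq0 -lt0n.
Qed.

Lemma mxtrace_tens (T1 T2 : finType) (X : Op T1) (Y : Op T2) : \tr (tens X Y) = \tr X * \tr Y.
Proof.
rewrite !mxtrace_ent sum_pair mulr_suml; apply: eq_bigr => x _.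
by rewrite mulr_sumr; apply: eq_bigr => y _; rewrite ent_tens.
Qed.

Lemma mid_idx_bij (P Q U V : finType) : bijective (@mid_idx P Q U V).
Proof. by exists (@mid_idx P U Q V) => -[[? ?] [? ?]]. Qed.

Lemma sum_mid_idx (P Q U V : finType) (F : ((P * Q) * (U * V))%type -> C) :
  \sum_z F (mid_idx z) = \sum_w F w.
Proof. by rewrite [RHS](reindex (@mid_idx P Q U V)) //; apply/onW_bij/mid_idx_bij. Qed.

Lemma mxtrace_mid (P Q U V : finType) (X : Op ((P * Q) * (U * V))%type) : \tr (mid X) = \tr X.
Proof.
rewrite !mxtrace_ent -(sum_mid_idx (fun w => ent X w w)).
by apply: eq_bigr => z _; rewrite ent_opm.
Qed.

Lemma psd_mid (P Q U V : finType) (X : Op ((P * Q) * (U * V))%type) : psd X -> psd (mid X).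
Proof.
move=> [hX qX]; split.
  by apply: opP => z w; rewrite ent_adj !ent_opm [RHS](hermitian_ent hX).
move=> u; pose v : 'rV[C]_#|{: (P * Q) * (U * V)}| :=
  \row_k u 0 (enum_rank (mid_idx (enum_val k))).
have := qX v; rewrite !quad_ent -sum_mid_idx.
under eq_bigr do rewrite -(sum_mid_idx (fun b => _ * ent X _ b * _)).
congr (0 <= _); apply: eq_bigr => a _; apply: eq_bigr => b _.
rewrite /v !mxE !enum_rankK ent_opm.
by case: a => [[? ?] [? ?]]; case: b => [[? ?] [? ?]].
Qed.

Lemma mxtrace_Eop (T : finType) (x y : T) : \tr (Eop R x y) = (x == y)%:R.
Proof.
rewrite mxtrace_ent -(sum_delta x (fun a => (a == y)%:R)); apply: eq_bigr => a _.
by rewrite ent_Eop natr_andb eq_sym.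
Qed.

Lemma ent_tensmap_id (S T1 T2 : finType) (K : Op T1 -> Op T2) (Z : Op (S * T1)%type) r r' a a' :
  ent (tensmap (@idmap R S) K Z) (r, a) (r', a') =
  \sum_y \sum_y' ent Z (r, y) (r', y') * ent (K (Eop R y y')) a a'.
Proof.
rewrite ent_opm /=.
transitivity (\sum_x (r == x)%:R * \sum_x' (r' == x')%:R *
   \sum_y \sum_y' ent Z (x, y) (x', y') * ent (K (Eop R y y')) a a').
  apply: eq_bigr => x _; rewrite mulr_sumr; apply: eq_bigr => x' _.
  rewrite !mulr_sumr; apply: eq_bigr => y _; rewrite !mulr_sumr; apply: eq_bigr => y' _.
  by rewrite /idmap ent_Eop natr_andb; ring.
by rewrite !sum_delta.
Qed.

Lemma mxtrace_tensmap_id (S T1 T2 : finType) (K : Op T1 -> Op T2) (Z : Op (S * T1)%type) :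
  is_TP K -> \tr (tensmap (@idmap R S) K Z) = \tr Z.
Proof.
move=> KTP; rewrite !mxtrace_ent !sum_pair; apply: eq_bigr => r _.
transitivity (\sum_y \sum_y' ent Z (r, y) (r, y') * \tr (K (Eop R y y'))).
  under eq_bigr do rewrite ent_tensmap_id.
  rewrite exchange_big; apply: eq_bigr => y _; rewrite exchange_big; apply: eq_bigr => y' _.
  by rewrite mxtrace_ent mulr_sumr.
apply: eq_bigr => y _; rewrite -(sum_delta y (fun y' => ent Z (r, y) (r, y'))).
by apply: eq_bigr => y' _; rewrite KTP mxtrace_Eop mulrC.
Qed.

Lemma ent_trmap (T1 T2 : finType) (Y : Op T1) (a a' : T2) :
  ent (trmap T2 Y) a a' = \tr Y * (a == a')%:R.
Proof. by rewrite ent_scale ent_1. Qed.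

Lemma ent_tensmap_trmap (A' B' A B : finType) (M : Op B' -> Op B) (y y' : A' * B') a b a' b' :
  ent (tensmap (@trmap R A' A) M (Eop R y y')) (a, b) (a', b') =
  (y.1 == y'.1)%:R * ((a == a')%:R * ent (M (Eop R y.2 y'.2)) b b').
Proof.
move: y y' => [y1 y2] [y1' y2']; rewrite ent_opm /=.
transitivity (\sum_x (y1 == x)%:R * \sum_x' (y1' == x')%:R * \sum_u (y2 == u)%:R *
   \sum_u' (y2' == u')%:R * (ent (trmap A (Eop R x x')) a a' * ent (M (Eop R u u')) b b')).
  apply: eq_bigr => x _; rewrite mulr_sumr; apply: eq_bigr => x' _.
  rewrite !mulr_sumr; apply: eq_bigr => u _; rewrite !mulr_sumr; apply: eq_bigr => u' _.
  rewrite ent_Eop !xpair_eqE !natr_andb (eq_sym x) (eq_sym x') (eq_sym u) (eq_sym u'); ring.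
by rewrite !sum_delta ent_trmap mxtrace_Eop; ring.
Qed.

Lemma choi_input_trmap (A' B' A B : finType) (M : Op B' -> Op B) :
  bimap (tensmap (@trmap R A' A) M) (tens (maxent R A') (maxent R B')) =
  tens (1%:M : Op (A' * A)%type) ((#|A'|%:R^-1 : R)%:C%C *: tensmap (@idmap R B') M (maxent R B')).
Proof.
apply: opP => -[[ra a] [rb b]] [[ra' a'] [rb' b']].
rewrite ent_opm /mid_idx /= ent_tensmap_id ent_tens ent_1 ent_scale ent_tensmap_id /=.
set k := (#|A'|%:R^-1 : R)%:C%C; set S := (X in _ = _ * (_ * X)).
transitivity (\sum_y1 (ra == y1)%:R * \sum_y1' (ra' == y1')%:R *
   ((y1 == y1')%:R * ((a == a')%:R * (k * S)))).
  rewrite sum_pair; apply: eq_bigr => y1 _.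
  rewrite exchange_big sum_pair /= mulr_sumr; apply: eq_bigr => y1' _.
  rewrite exchange_big /= /S !mulr_sumr; apply: eq_bigr => y2 _.
  rewrite !mulr_sumr; apply: eq_bigr => y2' _.
  rewrite ent_opm /mid_idx /= ent_tens !ent_maxent ent_tensmap_trmap /= !conjC_nat /k; ring.
by rewrite !sum_delta xpair_eqE natr_andb /k; ring.
Qed.

Lemma psd_mid_maxent (T1 T2 : finType) : psd (mid (tens (maxent R T1) (maxent R T2))).
Proof.
pose g (z : ((T1 * T2) * (T1 * T2))%type) : C := (z.1.1 == z.2.1)%:R * (z.1.2 == z.2.2)%:R.
have -> : mid (tens (maxent R T1) (maxent R T2)) =
    opm (fun z w => (#|T1|%:R^-1 * #|T2|%:R^-1 : R)%:C%C * (g z * (g w)^*)).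
  apply: opP => z w; rewrite [LHS]ent_opm ent_tens !ent_maxent [RHS]ent_opm /g /mid_idx /=.
  by rewrite !rmorphM /= !conjC_nat; ring.
by apply: psd_outer; rewrite mulr_ge0 // invr_ge0 ler0n.
Qed.

Lemma bimap_psd (A' B' A B RA RB : finType) (K : Op (A' * B')%type -> Op (A * B)%type)
    (Z : Op ((RA * A') * (RB * B'))%type) :
  is_CP K -> psd (mid Z) -> psd (bimap K Z).
Proof. by move=> KCP Zp; apply/psd_mid/KCP. Qed.

Lemma mxtrace_bimap (A' B' A B RA RB : finType) (K : Op (A' * B')%type -> Op (A * B)%type)
    (Z : Op ((RA * A') * (RB * B'))%type) :
  is_TP K -> \tr (bimap K Z) = \tr Z.
Proof. by move=> KTP; rewrite mxtrace_mid mxtrace_tensmap_id // mxtrace_mid. Qed.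

Lemma choi_state (A' B' A B : finType) (N : Op (A' * B')%type -> Op (A * B)%type) :
  (0 < #|A'|)%N -> (0 < #|B'|)%N -> is_channel N -> is_state (choi N).
Proof.
move=> A0 B0 [_ NCP NTP]; split; first exact/bimap_psd/psd_mid_maxent.
by rewrite mxtrace_bimap // mxtrace_tens !(maxent_state _).2 // mulr1.
Qed.

Lemma relent_choi_trmap_ge (A' B' A B : finType) (N : Op (A' * B')%type -> Op (A * B)%type)
    (M : Op B' -> Op B) :
  (0 < #|A'|)%N -> (0 < #|B'|)%N -> is_channel N -> is_channel M ->
  ((ln (#|A'|%:R : R) - condS (choi N))%:E <=
    relent (choi N) (bimap (tensmap (@trmap R A' A) M) (tens (maxent R A') (maxent R B'))))%E.
Proof.
move=> A0 B0 Nch [_ MCP MTP].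
have Ms : is_state (tensmap (@idmap R B') M (maxent R B')).
  have [Bp Btr] := maxent_state B0.
  by split; [exact: MCP | rewrite mxtrace_tensmap_id].
have c0 : 0 < (#|A'|%:R^-1 : R) by rewrite invr_gt0 ltr0n.
rewrite choi_input_trmap; have := relent_tens1_ge (choi_state A0 B0 Nch) Ms c0.
by rewrite lnV ?posrE ?ltr0n // opprK.
Qed.

End Quantum.

Unset Implicit Arguments.

Theorem mainTheorem18 (R : realType) (A' B' A B : finType)
    (N : Op R (A' * B')%type -> Op R (A * B)%type) :
  (0 < #|A'|)%N -> (0 < #|B'|)%N -> is_channel N ->
  ((ln (#|A'|%:R : R))%:E <= (condS (choi N))%:E - biS N)%E.
Proof.
move=> A0 B0 Nch; rewrite /biS oppeK.
have : ((ln (#|A'|%:R : R) - condS (choi N))%:E <= ereal_inf [set d | exists M : Op R B' -> Op R B,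
          is_channel M /\ d = bidiv N (tensmap (@trmap R A' A) M)])%E.
  apply: le_ereal_inf_tmp => _ [M [Mch ->]].
  apply: le_trans (relent_choi_trmap_ge A0 B0 Nch Mch) _.
  apply: ereal_sup_ubound; exists A', B', (maxent R A'), (maxent R B').
  by split=> //; apply: maxent_state.
case: ereal_inf => [r| |] //= lb; last by rewrite addey // leey.
by rewrite -EFinD lee_fin; move: lb; rewrite lee_fin; lra.
Qed.
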